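(* In the setting of the OMD iteration $\pi^{(1)}=\pi^{\mathrm{ref}}$, $\pi^{(t+1)}(a)\propto(\pi^{\mathrm{ref}}(a))^{1/t}(\pi^{(t)}(a))^{(t-1)/t}\exp(\frac\eta tQ^{(t)}(a))$, with $Q^{(t)}\in[0,1]^{\mathcal A}$ and $f^{(t)}(\pi)=\langle\pi,Q^{(t)}\rangle-\eta^{-1}\mathrm{KL}(\pi\|\pi^{\mathrm{ref}})$, the following hold for all $t\ge1$: (i) $\pi^{(t+1)}(a)\propto\pi^{\mathrm{ref}}(a)\exp\big(\frac\eta t\sum_{k=1}^tQ^{(k)}(a)\big)$, and $\pi^{(t+1)}=\arg\max_{\pi\in\Delta(\mathcal A)}\sum_{k=1}^tf^{(k)}(\pi)$; (ii) $\|\pi^{(t+1)}-\pi^{(t)}\|_1\le\frac{2\eta}{2t-1}$ and $f^{(t)}(\pi^{(t+1)})-f^{(t)}(\pi^{(t)})\le\frac{2\eta}{2t-1}$; (iii) for every $T\ge1$ and every $\pi^*\in\Delta(\mathcal A)$, $\sum_{t=1}^T\big(f^{(t)}(\pi^* )-f^{(t)}(\pi^{(t)})\big)\le2\eta(1+\log T)$.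
   Context: $\mathcal A$ finite, $\pi^{\mathrm{ref}}\in\Delta(\mathcal A)$ with full support, $\eta>0$; $\mathrm{KL}(p\|q)=\sum_ap(a)\log(p(a)/q(a))$; $\|\cdot\|_1$ is the $\ell_1$ norm on $\mathbb R^{\mathcal A}$. *)

From HB Require Import structures.
From mathcomp Require Import all_boot all_order all_algebra.
From mathcomp Require Import all_classical all_reals all_analysis.
Set Implicit Arguments. Unset Strict Implicit. Unset Printing Implicit Defensive.
Import Order.TTheory GRing.Theory Num.Theory.
Local Open Scope ring_scope.

Section Defs.
Variables (R : realType) (A : finType).

Definition in_simplex (p : A -> R) : Prop :=
  (forall a, 0 <= p a) /\ \sum_(a : A) p a = 1.

Definition KL (p q : A -> R) : R := \sum_(a : A) p a * ln (p a / q a).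

Definition l1dist (p q : A -> R) : R := \sum_(a : A) `|p a - q a|.

Definition fobj (piref : A -> R) (eta : R) (Q : nat -> A -> R) (t : nat)
  (pi : A -> R) : R :=
  \sum_(a : A) pi a * Q t a - eta^-1 * KL pi piref.

Definition omd_step (piref : A -> R) (eta : R) (Q : nat -> A -> R) (t : nat)
  (pit : A -> R) : A -> R :=
  let w := fun a => piref a `^ (t%:R^-1) * pit a `^ ((t%:R - 1) / t%:R)
                    * expR (eta / t%:R * Q t a) in
  fun a => w a / \sum_(b : A) w b.

(* omd t = pi^(t) for t >= 1 (omd 0 is an unused dummy equal to pi_ref):
   pi^(1) = pi_ref, pi^(t+1) = omd_step t pi^(t). *)
Fixpoint omd (piref : A -> R) (eta : R) (Q : nat -> A -> R) (t : nat)
  : A -> R :=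
  match t with
  | 0 => piref
  | n.+1 => if n == 0%N then piref else omd_step piref eta Q n (omd piref eta Q n)
  end.

End Defs.

(* Unrolling the recursion, [omd t.+1] is the Gibbs distribution proportional to
   piref * exp (eta / t * sum_(k <= t) Q_k) with normaliser Z_t, and the Gibbs
   variational identity
     sum_(k <= t) f_k p = t / eta * (ln Z_t - KL (p || omd t.+1))
   gives (i).  Consecutive iterates differ by an exponential tilt exp u with
   |u| <= eta / (t+1); averaging the chord bound for the convex map x |-> |x - E x|
   shows that such a tilt moves a distribution by at most 2 tanh (eta / (2 (t+1)))
   <= eta / (t+1) in l1.  By the same identity the gain of f_(t+1) over one step is
   at most (t+1) / eta * (KL (p || q) + KL (q || p)) = (t+1) / eta * sum (q - p) u,
   hence at most the l1 distance, and (ii) follows from eta / t <= 2 eta / (2t - 1).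
   Part (iii) is the be-the-leader lemma plus sum_(t <= T) 1 / t <= 1 + ln T. *)

From HB Require Import structures.
From mathcomp Require Import all_boot all_order all_algebra.
From mathcomp Require Import all_classical all_reals all_analysis.
From mathcomp Require Import ring lra.
Import Order.TTheory GRing.Theory Num.Theory.
Set Implicit Arguments. Unset Strict Implicit. Unset Printing Implicit Defensive.
Local Open Scope ring_scope.

Section RealFacts.
Variable R : realType.
Implicit Types x y : R.

Lemma ln_le_subr1 x : 0 < x -> ln x <= x - 1.
Proof.
by move=> x0; have := @le_ln1Dx R (x - 1); rewrite [1 + _]addrC subrK; apply; lra.
Qed.

Lemma ln_eq_subr1 x : 0 < x -> ln x = x - 1 -> x = 1.
Proof.
move=> x0 lnx; apply/eqP; rewrite -ln_eq0 //; apply/negPn/negP => /expR_gt1Dx.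
by rewrite lnK ?posrE // lnx; lra.
Qed.

Lemma tanh_half_le x : 0 <= x -> 2 * (expR x - 1) <= x * (expR x + 1).
Proof.
move=> x0; pose g y := y * (expR y + 1) - 2 * (expR y - 1).
have g' y : is_derive y 1 g (1 - expR y * (1 - y)).
  by apply: is_derive_eq; rewrite /GRing.scale /=; ring.
have g'_ge0 y : 0 <= 1 - expR y * (1 - y).
  have := ler_wpM2l (expR_ge0 y) (expR_ge1Dx (- y)).
  by rewrite expRN mulfV ?(lt0r_neq0 (expR_gt0 y)); lra.
have [c _ gx] := MVT_segment x0 (fun y _ => g' y)
  (derivable_within_continuous (fun y _ => @ex_derive _ _ _ _ _ _ _ (g' y))).
have : g 0 <= g x by rewrite -subr_ge0 gx mulr_ge0 // subr0.
by rewrite /g expR0; lra.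
Qed.

Lemma sum_inv_le_1Dln n : \sum_(1 <= t < n.+2) (t%:R : R)^-1 <= 1 + ln n.+1%:R.
Proof.
elim: n => [|n IH]; first by rewrite big_nat1 invr1 ln1 addr0.
have step : (n.+2%:R : R)^-1 <= ln n.+2%:R - ln n.+1%:R.
  have ratio_gt0 : 0 < n.+1%:R / n.+2%:R :> R by rewrite divr_gt0 ?ltr0n.
  have := ln_le_subr1 ratio_gt0; rewrite ln_div ?posrE ?ltr0n // -[n.+2%:R]natr1.
  have -> : n.+1%:R / (n.+1%:R + 1) - 1 = - (n.+1%:R + 1 : R)^-1.
    by field; apply: lt0r_neq0; have := ler0n R n; lra.
  lra.
rewrite big_nat_recr //; apply: le_trans (lerD IH step) _; lra.
Qed.

Lemma le_twice_div_subr1 x y : 0 <= x -> 1 <= y -> x / y <= 2 * x / (2 * y - 1).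
Proof.
move=> x0 y1; rewrite -subr_ge0.
have -> : 2 * x / (2 * y - 1) - x / y = x / (y * (2 * y - 1)).
  by field; apply/andP; split; apply: lt0r_neq0; lra.
by rewrite divr_ge0 // mulr_ge0 //; lra.
Qed.

Lemma abs_sub_le_chord (m M x c : R) : m <= x <= M -> m <= c <= M ->
  `|x - c| * (M - m) <= (M - x) * (c - m) + (x - m) * (M - c).
Proof.
move=> /andP[mx xM] /andP[mc cM]; have [xc|cx] := lerP x c.
- have : 0 <= (x - m) * (M - c) by rewrite mulr_ge0 // subr_ge0.
  nra.
- have : 0 <= (M - x) * (c - m) by rewrite mulr_ge0 // subr_ge0.
  nra.
Qed.

Lemma xln_div_ge x y : 0 <= x -> 0 < y -> x - y <= x * ln (x / y).
Proof.
rewrite le0r => /orP[/eqP->|x0] y0; first by rewrite mul0r; lra.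
have := ler_wpM2l (ltW x0) (ln_le_subr1 (divr_gt0 y0 x0)).
rewrite -[ln (y / x)]opprK -lnV ?posrE ?divr_gt0 // invf_div.
have -> : x * (y / x - 1) = y - x by field; rewrite lt0r_neq0.
lra.
Qed.

Lemma xln_div_eq x y : 0 <= x -> 0 < y -> x * ln (x / y) = x - y -> x = y.
Proof.
rewrite le0r => /orP[/eqP->|x0] y0; first by rewrite mul0r; lra.
rewrite -[ln (x / y)]opprK -lnV ?posrE ?divr_gt0 // invf_div => e.
have lnyx : ln (y / x) = y / x - 1.
  apply: (mulfI (lt0r_neq0 x0)).
  have -> : x * (y / x - 1) = y - x by field; rewrite lt0r_neq0.
  lra.
move: (ln_eq_subr1 (divr_gt0 y0 x0) lnyx) => /(congr1 ( *%R^~ x)).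
by rewrite divfK ?lt0r_neq0 // mul1r => ->.
Qed.

(* The right-hand side is at most [2 * M * (e^rho + e^-rho - 2)], so [L <= 2 tanh (rho/2)]. *)
Lemma chord_tanh_le (rho M L : R) : 0 < rho -> 0 < M ->
  L * M * (expR rho - expR (- rho)) <= 2 * ((expR rho - M) * (M - expR (- rho))) ->
  L <= rho.
Proof.
move=> rho0 M0; set lo := expR (- rho); set hi := expR rho => chord.
have lohi : lo * hi = 1 by rewrite -expRD addNr expR0.
have hi_gt1 : 1 < hi by rewrite expR_gt1.
have L_le : L * (hi - lo) <= 2 * (hi + lo - 2).
  by rewrite -(ler_pM2r M0); have := sqr_ge0 (M - 1); nra.
have L_hi : L * (hi + 1) <= 2 * (hi - 1).
  rewrite -(ler_pM2r (_ : 0 < hi - 1)); last lra.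
  have := ler_wpM2r (ltW (lt_trans ltr01 hi_gt1)) L_le.
  have : L * (lo * hi) = L by rewrite lohi mulr1.
  nra.
have := tanh_half_le (ltW rho0); rewrite -/hi => tanh_le.
by rewrite -(ler_pM2r (_ : 0 < hi + 1)); lra.
Qed.

End RealFacts.

Section Simplex.
Variables (R : realType) (A : finType).
Implicit Types (p q r u w v : A -> R) (lam rho : R).

Lemma KL_self p : KL p p = 0.
Proof.
rewrite /KL big1 // => a _; have [->|pa0] := eqVneq (p a) 0; first by rewrite mul0r.
by rewrite divff // ln1 mulr0.
Qed.

Lemma KL_change_ref p q r : (forall a, 0 <= p a) -> (forall a, 0 < q a) ->
  (forall a, 0 < r a) -> KL p r = KL p q + \sum_a p a * ln (q a / r a).
Proof.
move=> p0 q0 r0; rewrite /KL -big_split; apply: eq_bigr => a _ /=.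
have [->|pa0] := eqVneq (p a) 0; first by rewrite !mul0r addr0.
have pa_gt0 : 0 < p a by rewrite lt0r pa0 p0.
by rewrite !ln_div ?posrE //; ring.
Qed.

Lemma KL_excess p q : in_simplex p -> in_simplex q ->
  KL p q = \sum_a (p a * ln (p a / q a) - (p a - q a)).
Proof. by move=> [_ sp] [_ sq]; rewrite sumrB sumrB sp sq subrr subr0. Qed.

Lemma KL_ge0 p q : in_simplex p -> in_simplex q -> (forall a, 0 < q a) -> 0 <= KL p q.
Proof.
move=> hp hq q0; rewrite KL_excess //; apply: sumr_ge0 => a _.
by rewrite subr_ge0 xln_div_ge // hp.1.
Qed.

Lemma KL_le0_eq p q : in_simplex p -> in_simplex q -> (forall a, 0 < q a) ->
  KL p q <= 0 -> p = q.
Proof.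
move=> hp hq q0 KL_le0; apply/funext => a; apply: xln_div_eq => //; first exact: hp.1.
have terms_ge0 b : 0 <= p b * ln (p b / q b) - (p b - q b).
  by rewrite subr_ge0 xln_div_ge // hp.1.
apply/eqP; rewrite -subr_eq0; apply/eqP.
apply: (psumr_eq0P (P := fun _ => true) (fun b _ => terms_ge0 b)) => //.
by apply/eqP; rewrite eq_le -KL_excess // KL_le0 KL_ge0.
Qed.

Lemma KL_addC_tilt p q u lam : in_simplex p -> in_simplex q -> (forall a, 0 < p a) ->
  0 < lam -> (forall a, q a = lam * p a * expR (u a)) ->
  KL p q + KL q p = \sum_a (q a - p a) * u a.
Proof.
move=> [_ sp] [_ sq] p0 lam0 qE.
have ln_qp a : ln (q a / p a) = ln lam + u a.
  have -> : q a / p a = lam * expR (u a) by rewrite qE; field; rewrite lt0r_neq0.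
  by rewrite lnM ?posrE ?expR_gt0 // expRK.
have ln_pq a : ln (p a / q a) = - ln (q a / p a).
  by rewrite -lnV ?invf_div // posrE divr_gt0 // qE !mulr_gt0 // expR_gt0.
rewrite /KL -big_split /=.
transitivity (\sum_a ((q a - p a) * u a + ln lam * (q a - p a))).
  by apply: eq_bigr => a _; rewrite ln_pq ln_qp; ring.
by rewrite big_split /= -mulr_sumr sumrB sp sq subrr mulr0 addr0.
Qed.

Lemma KL_addC_tilt_le p q u lam rho : in_simplex p -> in_simplex q ->
  (forall a, 0 < p a) -> 0 < lam -> (forall a, q a = lam * p a * expR (u a)) ->
  (forall a, `|u a| <= rho) -> KL p q + KL q p <= rho * l1dist q p.
Proof.
move=> hp hq p0 lam0 qE u_le; rewrite (KL_addC_tilt hp hq p0 lam0 qE).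
rewrite /l1dist mulr_sumr; apply: ler_sum => a _.
apply: le_trans (ler_norm _) _; rewrite normrM [rho * _]mulrC.
by rewrite ler_wpM2l // u_le.
Qed.

Lemma l1dist_tilt_le p q u lam rho : in_simplex p -> in_simplex q -> 0 < rho ->
  (forall a, `|u a| <= rho) -> (forall a, q a = lam * p a * expR (u a)) ->
  l1dist q p <= rho.
Proof.
move=> [p0 sp] [_ sq] rho0 u_le qE.
pose lo := expR (- rho); pose hi := expR rho; pose M := \sum_a p a * expR (u a).
have eu_itv a : lo <= expR (u a) <= hi by rewrite !ler_expR -ler_norml.
have M_itv : lo <= M <= hi.
  apply/andP; split.
  - rewrite -[lo]mul1r -sp mulr_suml /M; apply: ler_sum => a _.
    by rewrite ler_wpM2l // (andP (eu_itv a)).1.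
  - rewrite -[hi]mul1r -sp mulr_suml /M; apply: ler_sum => a _.
    by rewrite ler_wpM2l // (andP (eu_itv a)).2.
have M_gt0 : 0 < M := lt_le_trans (expR_gt0 _) (andP M_itv).1.
have lamM : lam * M = 1.
  by rewrite -sq /M mulr_sumr; apply: eq_bigr => a _; rewrite qE mulrA.
have lam_ge0 : 0 <= lam by rewrite -(ler_pM2r M_gt0) lamM mul0r.
have dist : l1dist q p * M = \sum_a p a * `|expR (u a) - M|.
  rewrite /l1dist mulr_suml; apply: eq_bigr => a _.
  have -> : q a - p a = lam * (p a * (expR (u a) - M)).
    have pE : p a = lam * M * p a by rewrite lamM mul1r.
    by rewrite qE {2}pE; ring.
  by rewrite !normrM (ger0_norm lam_ge0) (ger0_norm (p0 a)) mulrAC lamM mul1r.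
have sum_affine c d : \sum_a p a * (c * expR (u a) + d) = c * M + d.
  under eq_bigr do rewrite mulrDr mulrCA.
  by rewrite big_split /= -mulr_sumr -mulr_suml sp mul1r.
apply: (chord_tanh_le rho0 M_gt0); rewrite -/lo -/hi dist mulr_suml.
(* [|x - M|] is convex in [x], hence below its chord over [[lo, hi]]. *)
apply: (@le_trans _ _
  (\sum_a p a * ((hi + lo - 2 * M) * expR (u a) + (hi * M + lo * M - 2 * hi * lo)))).
  apply: ler_sum => a _; rewrite -mulrA ler_wpM2l //.
  by have := abs_sub_le_chord (eu_itv a) M_itv; lra.
by rewrite sum_affine; lra.
Qed.

Lemma div_sum_scale w v (K : R) a : K != 0 -> (forall b, v b = w b * K) ->
  v a / \sum_b v b = w a / \sum_b w b.
Proof.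
move=> K0 vE; rewrite vE (eq_bigr _ (fun b _ => vE b)) -mulr_suml invfM mulrACA.
by rewrite divff // mulr1.
Qed.

End Simplex.

Lemma be_the_leader (R : numDomainType) (X : Type) (S : X -> Prop) (f : nat -> X -> R)
    (x : nat -> X) :
  (forall T, S (x T)) ->
  (forall T y, S y -> \sum_(1 <= k < T.+1) f k y <= \sum_(1 <= k < T.+1) f k (x T)) ->
  forall T y, S y -> \sum_(1 <= k < T.+1) f k y <= \sum_(1 <= k < T.+1) f k (x k).
Proof.
move=> Sx leader; elim=> [|T IH] y Sy; first by rewrite !big_geq.
apply: le_trans (leader _ _ Sy) _.
by rewrite [leRHS]big_nat_recr //= [leLHS]big_nat_recr //= lerD2r IH.
Qed.

Section OMD.
Variables (R : realType) (A : finType) (piref : A -> R) (eta : R) (Q : nat -> A -> R).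
Hypotheses (piref_simplex : in_simplex piref) (piref_gt0 : forall a, 0 < piref a).
Hypotheses (eta_gt0 : 0 < eta) (Q_itv : forall t a, (1 <= t)%N -> 0 <= Q t a <= 1).

Local Notation pi := (omd piref eta Q).
Local Notation f := (fobj piref eta Q).

Definition cumQ t a := \sum_(1 <= k < t.+1) Q k a.
Definition gibbs t a := piref a * expR (eta / t%:R * cumQ t a).
Definition gibbsZ t := \sum_b gibbs t b.
Definition drift t a := eta / t.+1%:R * cumQ t.+1 a - eta / t%:R * cumQ t a.

Lemma cumQ0 a : cumQ 0 a = 0.
Proof. by rewrite /cumQ big_geq. Qed.

Lemma cumQS t a : cumQ t.+1 a = cumQ t a + Q t.+1 a.
Proof. by rewrite /cumQ big_nat_recr. Qed.

Lemma cumQ_itv t a : 0 <= cumQ t a <= t%:R.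
Proof.
elim: t => [|t IH]; first by rewrite cumQ0 lexx.
by rewrite cumQS -natr1; have := Q_itv a (ltn0Sn t); lra.
Qed.

(* Also at [t = 0], where [x / 0 = 0] but [cumQ 0 a = 0]. *)
Lemma cumQ_divfK t a : cumQ t a / t%:R * t%:R = cumQ t a.
Proof.
by case: t => [|t]; [rewrite cumQ0 !mul0r | rewrite divfK ?pnatr_eq0].
Qed.

Lemma eta_cumQS t a : eta / t.+1%:R * cumQ t.+1 a
  = (t%:R * (eta / t%:R * cumQ t a) + eta * Q t.+1 a) / t.+1%:R.
Proof. by rewrite cumQS -[cumQ t a in LHS]cumQ_divfK; ring. Qed.

Lemma gibbs_gt0 t a : 0 < gibbs t a.
Proof. by rewrite mulr_gt0 ?expR_gt0. Qed.

Lemma gibbsZ_gt0 t : 0 < gibbsZ t.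
Proof.
case: (pickP (@predT A)) => [a _|none]; last first.
  by have := piref_simplex.2; rewrite big_pred0 // => /eqP; rewrite eq_sym oner_eq0.
rewrite /gibbsZ (bigD1 a) //= ltr_pwDl ?gibbs_gt0 //.
by apply: sumr_ge0 => b _; exact/ltW/gibbs_gt0.
Qed.

Lemma ln_gibbs t a : ln (gibbs t a) = ln (piref a) + eta / t%:R * cumQ t a.
Proof. by rewrite lnM ?posrE ?expR_gt0 // expRK. Qed.

Lemma gibbsS t a : gibbs t.+1 a = gibbs t a * expR (drift t a).
Proof. by rewrite /gibbs /drift -[RHS]mulrA -expRD addrC subrK. Qed.

Lemma omd_step_weight t a :
  piref a `^ (t.+1%:R^-1) * (gibbs t a / gibbsZ t) `^ ((t.+1%:R - 1) / t.+1%:R)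
    * expR (eta / t.+1%:R * Q t.+1 a)
  = gibbs t.+1 a * expR (- (t%:R / t.+1%:R) * ln (gibbsZ t)).
Proof.
have g0 := gibbs_gt0 t a; have Z0 := gibbsZ_gt0 t; have p0 := piref_gt0 a.
apply: ln_inj; rewrite ?posrE ?mulr_gt0 ?powR_gt0 ?expR_gt0 ?divr_gt0 //.
rewrite !lnM ?posrE ?mulr_gt0 ?powR_gt0 ?expR_gt0 ?divr_gt0 // !ln_powR !expRK.
rewrite ln_div ?posrE // !ln_gibbs eta_cumQS -natr1.
(* Hide [t%:R^-1] from [field], which cannot assume [t != 0]. *)
set X := eta / t%:R * cumQ t a.
by field; rewrite natr1 pnatr_eq0.
Qed.

Lemma omd_gibbs t a : pi t.+1 a = gibbs t a / gibbsZ t.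
Proof.
elim: t a => [|t IH] a.
  have g0 b : gibbs 0 b = piref b by rewrite /gibbs cumQ0 mulr0 expR0 mulr1.
  by rewrite /gibbsZ (eq_bigr _ (fun b _ => g0 b)) g0 piref_simplex.2 divr1.
have -> : pi t.+2 = omd_step piref eta Q t.+1 (pi t.+1) by [].
rewrite /omd_step (_ : pi t.+1 = fun b => gibbs t b / gibbsZ t); last exact/funext.
apply: div_sum_scale (omd_step_weight t); exact/lt0r_neq0/expR_gt0.
Qed.

Lemma omd_gt0 t a : 0 < pi t.+1 a.
Proof. by rewrite omd_gibbs divr_gt0 ?gibbs_gt0 ?gibbsZ_gt0. Qed.

Lemma omd_simplex t : in_simplex (pi t.+1).
Proof.
split=> [a|]; first exact/ltW/omd_gt0.
under eq_bigr do rewrite omd_gibbs.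
by rewrite -mulr_suml divff // lt0r_neq0 // gibbsZ_gt0.
Qed.

Lemma omd_tilt t a :
  pi t.+2 a = gibbsZ t / gibbsZ t.+1 * pi t.+1 a * expR (drift t a).
Proof.
by rewrite !omd_gibbs gibbsS; field; rewrite !lt0r_neq0 ?gibbsZ_gt0.
Qed.

Lemma mean_cumQ_itv t a : 0 <= eta / t%:R * cumQ t a <= eta.
Proof.
case: t => [|t]; first by rewrite cumQ0 mulr0 lexx ltW.
have /andP[S0 St] := cumQ_itv t.+1 a.
apply/andP; split; first by rewrite mulr_ge0 // divr_ge0 // ltW.
by rewrite mulrAC ler_pdivrMr ?ltr0Sn // ler_pM2l.
Qed.

Lemma abs_drift_le t a : `|drift t a| <= eta / t.+1%:R.
Proof.
have -> : drift t a = (eta * Q t.+1 a - eta / t%:R * cumQ t a) / t.+1%:R.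
  rewrite /drift eta_cumQS; set X := eta / t%:R * cumQ t a.
  by field; rewrite nat1r pnatr_eq0.
rewrite normrM [`|_^-1|]ger0_norm ?invr_ge0 ?ler0n // ler_wpM2r ?invr_ge0 ?ler0n //.
have /andP[Q0 Q1] := Q_itv a (ltn0Sn t); have := mean_cumQ_itv t a.
have : eta * Q t.+1 a <= eta by rewrite -[leRHS]mulr1 ler_pM2l.
rewrite ler_norml; nra.
Qed.

Lemma ln_omd_div t a : ln (pi t.+1 a / piref a) = eta / t%:R * cumQ t a - ln (gibbsZ t).
Proof.
rewrite ln_div ?posrE ?omd_gt0 // omd_gibbs ln_div ?posrE ?gibbs_gt0 ?gibbsZ_gt0 //.
by rewrite ln_gibbs; ring.
Qed.

Lemma sum_fobj_gibbs t p : in_simplex p ->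
  \sum_(1 <= k < t.+1) f k p = t%:R / eta * (ln (gibbsZ t) - KL p (pi t.+1)).
Proof.
move=> [p0 sp]; case: t => [|t]; first by rewrite big_geq // !mul0r.
have -> : \sum_(1 <= k < t.+2) f k p
    = \sum_a p a * cumQ t.+1 a - t.+1%:R * (eta^-1 * KL p piref).
  rewrite /fobj sumrB sumr_const_nat subn1 /= mulr_natl exchange_big /=.
  by congr (_ - _); apply: eq_bigr => a _; rewrite /cumQ mulr_sumr.
rewrite (KL_change_ref p0 (omd_gt0 t.+1) piref_gt0).
under [X in KL _ _ + X]eq_bigr do rewrite ln_omd_div mulrBr mulrCA.
rewrite sumrB -mulr_sumr -mulr_suml sp mul1r.
by field; rewrite lt0r_neq0 // nat1r pnatr_eq0.
Qed.

Lemma sum_fobj_le_omd t p : in_simplex p ->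
  \sum_(1 <= k < t.+1) f k p <= \sum_(1 <= k < t.+1) f k (pi t.+1).
Proof.
move=> hp; rewrite (sum_fobj_gibbs t hp) (sum_fobj_gibbs t (omd_simplex t)) KL_self.
rewrite ler_wpM2l ?divr_ge0 ?ler0n ?(ltW eta_gt0) // subr0 gerBl.
exact: KL_ge0 hp (omd_simplex t) (omd_gt0 t).
Qed.

Lemma sum_fobj_omd_uniq t p : (1 <= t)%N -> in_simplex p ->
  \sum_(1 <= k < t.+1) f k (pi t.+1) <= \sum_(1 <= k < t.+1) f k p -> p = pi t.+1.
Proof.
move=> t_gt0 hp; rewrite (sum_fobj_gibbs t hp) (sum_fobj_gibbs t (omd_simplex t)) KL_self.
rewrite ler_pM2l ?divr_gt0 ?ltr0n // subr0 => KL_le0.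
by apply: KL_le0_eq hp (omd_simplex t) (omd_gt0 t) _; lra.
Qed.

Lemma l1dist_omd_le t : l1dist (pi t.+2) (pi t.+1) <= eta / t.+1%:R.
Proof.
apply: l1dist_tilt_le (omd_simplex t) (omd_simplex t.+1) _ (abs_drift_le t) (omd_tilt t).
by rewrite divr_gt0 ?ltr0Sn.
Qed.

Lemma fobj_omd_step_le t :
  f t.+1 (pi t.+2) - f t.+1 (pi t.+1) <= l1dist (pi t.+2) (pi t.+1).
Proof.
have fE x : f t.+1 x = \sum_(1 <= k < t.+2) f k x - \sum_(1 <= k < t.+1) f k x.
  by rewrite big_nat_recr // addrAC subrr add0r.
have [hp hq] := (omd_simplex t, omd_simplex t.+1).
rewrite !fE !(sum_fobj_gibbs _ hp) !(sum_fobj_gibbs _ hq) !KL_self.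
set p := pi t.+1; set q := pi t.+2.
have lam_gt0 : 0 < gibbsZ t / gibbsZ t.+1 by rewrite divr_gt0 ?gibbsZ_gt0.
have KL_sym := KL_addC_tilt_le hp hq (omd_gt0 t) lam_gt0 (omd_tilt t) (abs_drift_le t).
have KLqp_ge0 : 0 <= KL q p := KL_ge0 hq hp (omd_gt0 t).
(* The gain equals [t.+1 / eta * KL p q + t / eta * KL q p]. *)
have c01 : t%:R / eta <= t.+1%:R / eta by rewrite ler_pM2r ?invr_gt0 // ler_nat.
have c1_ge0 : 0 <= t.+1%:R / eta by rewrite divr_ge0 ?ler0n // ltW.
have := ler_wpM2r KLqp_ge0 c01; have := ler_wpM2l c1_ge0 KL_sym.
rewrite mulrA (_ : t.+1%:R / eta * (eta / t.+1%:R) = 1); last first.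
  by field; rewrite nat1r pnatr_eq0 lt0r_neq0.
lra.
Qed.

Lemma omd_regret_le T p : in_simplex p ->
  \sum_(1 <= t < T.+2) (f t p - f t (pi t)) <= eta * (1 + ln T.+1%:R).
Proof.
move=> hp; apply: (@le_trans _ _ (\sum_(1 <= t < T.+2) (f t (pi t.+1) - f t (pi t)))).
  rewrite sumrB [leRHS]sumrB lerD2r.
  exact: (be_the_leader (x := fun k => pi k.+1) omd_simplex sum_fobj_le_omd T.+1 hp).
apply: (@le_trans _ _ (\sum_(1 <= t < T.+2) eta * t%:R^-1)).
  apply: ler_sum_nat => -[//|t] _.
  exact: le_trans (fobj_omd_step_le t) (l1dist_omd_le t).
by rewrite -mulr_sumr ler_pM2l // sum_inv_le_1Dln.
Qed.

End OMD.

Unset Implicit Arguments.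

Theorem mainTheorem9 (R : realType) (A : finType) (piref : A -> R) (eta : R)
  (Q : nat -> A -> R)
  (Hpiref : in_simplex piref) (Hfull : forall a, 0 < piref a)
  (Heta : 0 < eta)
  (HQ : forall t a, (1 <= t)%N -> 0 <= Q t a <= 1) :
  let pi := omd piref eta Q in
  let f := fobj piref eta Q in
  (* (i) *)
  (forall t : nat, (1 <= t)%N ->
     (forall a, pi t.+1 a =
        piref a * expR (eta / t%:R * \sum_(1 <= k < t.+1) Q k a) /
        \sum_(b : A) piref b * expR (eta / t%:R * \sum_(1 <= k < t.+1) Q k b))
     /\ in_simplex (pi t.+1)
     /\ (forall p, in_simplex p ->
           \sum_(1 <= k < t.+1) f k p <= \sum_(1 <= k < t.+1) f k (pi t.+1))
     /\ (forall p, in_simplex p ->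
           \sum_(1 <= k < t.+1) f k (pi t.+1) <= \sum_(1 <= k < t.+1) f k p ->
           p = pi t.+1))
  /\
  (* (ii) *)
  (forall t : nat, (1 <= t)%N ->
     l1dist (pi t.+1) (pi t) <= 2 * eta / (2 * t%:R - 1)
     /\ f t (pi t.+1) - f t (pi t) <= 2 * eta / (2 * t%:R - 1))
  /\
  (* (iii) *)
  (forall (T : nat) (pstar : A -> R), (1 <= T)%N -> in_simplex pstar ->
     \sum_(1 <= t < T.+1) (f t pstar - f t (pi t)) <= 2 * eta * (1 + ln T%:R)).
Proof.
move=> pi f; rewrite {}/pi {}/f; split; [|split].
- move=> t t_gt0; split; first by move=> a; rewrite omd_gibbs.
  split; first exact: omd_simplex.
  by split=> p hp; [exact: sum_fobj_le_omd | exact: sum_fobj_omd_uniq].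
- move=> [//|t] _; have t1 : 1 <= t.+1%:R :> R by rewrite ler1n.
  have l1_le := le_trans (l1dist_omd_le Hpiref Hfull Heta HQ t)
    (le_twice_div_subr1 (ltW Heta) t1).
  by split; last exact: le_trans (fobj_omd_step_le Hpiref Hfull Heta HQ t) l1_le.
- move=> [//|T] p _ hp; apply: le_trans (omd_regret_le Hpiref Hfull Heta HQ T hp) _.
  have T1 : 1 <= T.+1%:R :> R by rewrite ler1n.
  have := ln_ge0 T1; nra.
Qed.
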